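(* Let $k\ge 3$ and $A\in\mathcal{M}_d$. Then $$\operatorname{tr}_1\big[(1\,2\cdots k)^{T_k}(A\otimes\mathbb{1}^{\otimes(k-1)})\big]=\Big(\cdots\big((A\otimes\mathbb{1}^{\otimes(k-2)})^{R_{k-1,k-2}}\big)^{R_{k-1,k-3}}\cdots\Big)^{R_{k-1,1}},$$ i.e. the reshufflings $R_{k-1,k-2},R_{k-1,k-3},\dots,R_{k-1,1}$ are applied successively, in this order, to $A\otimes\mathbb{1}^{\otimes(k-2)}\in\mathcal{M}_d^{\otimes(k-1)}$.
   Context: $\mathcal{M}_d$ denotes complex $d\times d$ matrices; $\{|i\rangle\}$ is a fixed orthonormal basis of $\mathbb{C}^d$. A permutation $\sigma\in S_k$ acts on $(\mathbb{C}^d)^{\otimes k}$ by $\sigma|v_1\rangle\otimes\cdots\otimes|v_k\rangle=|v_{\sigma^{-1}(1)}\rangle\otimes\cdots\otimes|v_{\sigma^{-1}(k)}\rangle$; $(1\,2\cdots k)$ is the cycle $1\to2\to\cdots\to k\to1$. $T_k$ is the partial transpose on the $k$-th factor in the basis $\{|i\rangle\}$; $\operatorname{tr}_1$ is the partial trace over the first factor. Reshuffling of sites $a,b$ on $\mathcal{M}_d^{\otimes n}$: $R_{a,b}$ is the linear map defined on basis elements by sending $|i_1\dots i_n\rangle\langle j_1\dots j_n|$ to the operator obtained by exchanging the $a$-th ket index $i_a$ with the $b$-th bra index $j_b$, i.e. the new $a$-th ket index is $j_b$ and the new $b$-th bra index is $i_a$, all other indices unchanged. *)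

From HB Require Import structures.
From mathcomp Require Import all_boot all_order all_fingroup all_algebra.
Set Implicit Arguments. Unset Strict Implicit. Unset Printing Implicit Defensive.
Import GRing.Theory Num.Theory.
Local Open Scope ring_scope.

(* Operators on (C^d)^{\otimes n}, given by their matrix entries
   <i_1..i_n| X |j_1..j_n> in the product basis; sites are numbered 0..n-1
   (site s here is site s+1 of the paper). *)
Definition idx (d n : nat) := {ffun 'I_n -> 'I_d}.
Definition op (C : Type) (d n : nat) := idx d n -> idx d n -> C.

Section Ops.
Variables (C : comNzRingType) (d : nat).

Definition opmul n (X Y : op C d n) : op C d n :=
  fun i j => \sum_(l : idx d n) X i l * Y l j.

(* permutation operator: sigma |v_1..v_n> = |v_{sigma^-1 1} .. v_{sigma^-1 n}> *)
Definition perm_op n (s : {perm 'I_n}) : op C d n :=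
  fun i j => [forall m : 'I_n, i m == j ((s^-1)%g m)]%:R.

Definition set_idx n (i : idx d n) (s : 'I_n) (a : 'I_d) : idx d n :=
  [ffun l => if l == s then a else i l].

Definition ptrans n (t : 'I_n) (X : op C d n) : op C d n :=
  fun p q => X (set_idx p t (q t)) (set_idx q t (p t)).

(* reshuffling R_{a,b}: |i><j| |-> exchange ket index i_a with bra index j_b *)
Definition reshuffle n (a b : 'I_n) (X : op C d n) : op C d n :=
  fun p q => X (set_idx p a (q b)) (set_idx q b (p a)).

Definition cons_idx n (a : 'I_d) (i : idx d n) : idx d n.+1 :=
  [ffun l => if unlift ord0 l is Some l' then i l' else a].

Definition ptr1 n (X : op C d n.+1) : op C d n :=
  fun i j => \sum_(a : 'I_d) X (cons_idx a i) (cons_idx a j).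

Definition ampl (A : 'M[C]_d) n : op C d n.+1 :=
  fun i j => A (i ord0) (j ord0) *
             [forall l : 'I_n, i (lift ord0 l) == j (lift ord0 l)]%:R.
End Ops.

(* the cycle (1 2 ... k): site s |-> site s+1 (mod k) *)
Definition cyc (k : nat) : {perm 'I_k} := perm (@ordS_inj k).

From HB Require Import structures.
From mathcomp Require Import all_boot all_order all_fingroup all_algebra.
From Stdlib Require Import FunctionalExtensionality.
Set Implicit Arguments. Unset Strict Implicit. Unset Printing Implicit Defensive.
Import GRing.Theory.
Local Open Scope ring_scope.

(* On the left, write the row and
   column multi-indices of the (m+2)-site operator as (a, i) and (b, j): the
   partially transposed cycle is the indicator of a = i_m, b = i_0 and
   (j_0, ..., j_(m-1)) = (i_1, ..., i_(m-1), j_m), so tracing out the first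
   factor against A leaves A_(i_0, i_m) times that last condition.  On the
   right, the reshufflings R_(m,m-1), ..., R_(m,0) together shift the bra
   indices of sites 0..m-1 one site up, feed the ket index of site m into
   site 0 and move the bra index of site m-1 into the ket slot of site m;
   evaluating A ⊗ 1 at the result gives the same entry. *)

Lemma forall_ordS n (P : pred 'I_n.+1) :
  [forall s, P s] = P ord0 && [forall s : 'I_n, P (lift ord0 s)].
Proof.
apply/forallP/andP => [P_all | [P0 /forallP P_lift] s].
  by split; last apply/forallP.
by case: (unliftP ord0 s) => [r|] ->.
Qed.

Lemma widen_ord0 n : widen_ord (leqnSn n.+1) ord0 = ord0.
Proof. exact: val_inj. Qed.

Lemma widen_lift0 n (k : 'I_n) :
  widen_ord (leqnSn n.+1) (lift ord0 k) = lift ord0 (widen_ord (leqnSn n) k).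
Proof. exact: val_inj. Qed.

Lemma widen_ord_eq_max n (k : 'I_n) : (widen_ord (leqnSn n) k == ord_max) = false.
Proof. by rewrite -val_eqE /= ltn_eqF. Qed.

Lemma lift0_eq_max n (k : 'I_n.+1) : (lift ord0 k == ord_max) = (k == ord_max).
Proof. by rewrite -!val_eqE /= eqSS. Qed.

Lemma cyc_max n : cyc n.+1 ord_max = ord0.
Proof. by apply: val_inj; rewrite /cyc permE; apply: modnn. Qed.

Lemma cyc_widen n (k : 'I_n) : cyc n.+1 (widen_ord (leqnSn n) k) = lift ord0 k.
Proof. by apply: val_inj; rewrite /cyc permE /= modn_small ?ltnS. Qed.

Lemma cycV0 n : ((cyc n.+1)^-1 ord0)%g = ord_max.
Proof. by rewrite -(cyc_max n) permK. Qed.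

Lemma cycV_lift0 n (k : 'I_n) :
  ((cyc n.+1)^-1 (lift ord0 k))%g = widen_ord (leqnSn n) k.
Proof. by rewrite -cyc_widen permK. Qed.

Lemma iota0S n : iota 0 n.+1 = rcons (iota 0 n) n.
Proof. by rewrite -addn1 iotaD cats1. Qed.

Lemma sum_mul_natr_eq (R : pzSemiRingType) (T : finType) (F : T -> R) (y : T) :
  \sum_(x : T) F x * (x == y)%:R = F y.
Proof.
rewrite (bigD1 y) //= eqxx mulr1 big1 ?addr0 // => x /negPf ->.
by rewrite mulr0.
Qed.

Section MultiIndices.
Variable d : nat.

Lemma set_idxE n (i : idx d n) s a t : set_idx i s a t = if t == s then a else i t.
Proof. by rewrite ffunE. Qed.

Lemma set_idx_id n (i : idx d n) s a b : set_idx (set_idx i s a) s b = set_idx i s b.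
Proof. by apply/ffunP => t; rewrite !set_idxE; case: eqP. Qed.

Lemma cons_idx0 n a (i : idx d n) : cons_idx a i ord0 = a.
Proof. by rewrite ffunE unlift_none. Qed.

Lemma cons_idx_lift0 n a (i : idx d n) s : cons_idx a i (lift ord0 s) = i s.
Proof. by rewrite ffunE liftK. Qed.

Lemma cons_idx_max n a (i : idx d n.+1) : cons_idx a i ord_max = i ord_max.
Proof.
by rewrite (_ : ord_max = lift ord0 ord_max) ?cons_idx_lift0 //; apply: val_inj.
Qed.

Lemma set_idx_cons_max n a (i : idx d n.+1) c :
  set_idx (cons_idx a i) ord_max c = cons_idx a (set_idx i ord_max c).
Proof.
apply/ffunP => s; case: (unliftP ord0 s) => [r|] ->.
  by rewrite set_idxE !cons_idx_lift0 set_idxE lift0_eq_max.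
by rewrite set_idxE !cons_idx0.
Qed.

Lemma sum_idxS (C : nmodType) n (F : idx d n.+1 -> C) :
  \sum_(l : idx d n.+1) F l = \sum_(a : 'I_d) \sum_(i : idx d n) F (cons_idx a i).
Proof.
rewrite pair_big /= (reindex (fun ai : 'I_d * idx d n => cons_idx ai.1 ai.2)) //.
exists (fun l : idx d n.+1 => (l ord0, [ffun s => l (lift ord0 s)])).
  move=> [a i] _ /=; rewrite cons_idx0; congr pair.
  by apply/ffunP => s; rewrite ffunE cons_idx_lift0.
move=> l _; apply/ffunP => s; case: (unliftP ord0 s) => [r|] ->.
  by rewrite [LHS]ffunE liftK ffunE.
by rewrite cons_idx0.
Qed.

Definition shift_match n (i j : idx d n.+1) : bool :=
  [forall k : 'I_n,
     set_idx i ord_max (j ord_max) (lift ord0 k) == j (widen_ord (leqnSn n) k)].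

End MultiIndices.

Section Operators.
Variables (C : comNzRingType) (d : nat).

Lemma ampl_cons (A : 'M[C]_d) n a b (i j : idx d n) :
  ampl (n := n) A (cons_idx a i) (cons_idx b j) = A a b * (i == j)%:R.
Proof.
rewrite /ampl !cons_idx0; congr (_ * (nat_of_bool _)%:R).
apply/forallP/eqP => [eq_ij | -> l]; last by rewrite !cons_idx_lift0.
apply: (iffLR (ffunP _ _)) => l.
by have /eqP := eq_ij l; rewrite !cons_idx_lift0.
Qed.

Lemma ptr1_mul_ampl (A : 'M[C]_d) n (X : op C d n.+1) (i j : idx d n) :
  ptr1 (opmul X (ampl (n := n) A)) i j =
  \sum_(a : 'I_d) \sum_(b : 'I_d) X (cons_idx a i) (cons_idx b j) * A b a.
Proof.
apply: eq_bigr => a _; rewrite /opmul sum_idxS; apply: eq_bigr => b _.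
under eq_bigr => l _ do rewrite ampl_cons mulrA.
exact: sum_mul_natr_eq.
Qed.

Lemma ptrans_cyc_cons n a b (i j : idx d n.+2) :
  ptrans ord_max (perm_op C (cyc n.+3)) (cons_idx a i) (cons_idx b j) =
  [&& a == i ord_max, b == i ord0 & shift_match i j]%:R.
Proof.
rewrite /ptrans /perm_op !cons_idx_max !set_idx_cons_max 2!forall_ordS.
rewrite cycV0 cycV_lift0 widen_ord0 !cons_idx0 cons_idx_max set_idxE eqxx.
rewrite cons_idx_lift0 set_idxE -val_eqE /= [i ord0 == b]eq_sym /shift_match.
by under eq_forallb => k do rewrite cons_idx_lift0 cycV_lift0 widen_lift0
  cons_idx_lift0 [set_idx j _ _ _]set_idxE widen_ord_eq_max.
Qed.

Lemma foldr_reshuffle m (X : op C d m.+1) n (p q : idx d m.+1) :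
  (n <= m.+1)%N ->
  foldr (fun b Y => reshuffle ord_max (inord b) Y) X (iota 0 n) p q =
  X (set_idx p ord_max (cons_idx (p ord_max) q (inord n)))
    [ffun r : 'I_m.+1 => if (r < n)%N
                         then cons_idx (p ord_max) q (widen_ord (leqnSn m.+1) r)
                         else q r].
Proof.
elim: n X => [|n IHn] X le_n_m.
  congr X; last by apply/ffunP => r; rewrite ffunE.
  apply/ffunP => r; rewrite set_idxE (_ : inord 0 = ord0) ?cons_idx0.
    by case: eqP => [->|].
  by apply: val_inj; rewrite /= inordK.
rewrite iota0S foldr_rcons IHn ?(ltnW le_n_m) // /reshuffle set_idxE eqxx set_idx_id.
have c_next : cons_idx (p ord_max) q (inord n.+1) = q (inord n).
  rewrite (_ : inord n.+1 = lift ord0 (inord n)) ?cons_idx_lift0 //.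
  by apply: val_inj; rewrite /= !inordK.
have widen_n : widen_ord (leqnSn m.+1) (inord n) = inord n.
  by apply: val_inj; rewrite /= !inordK //; apply: ltnW.
set c := cons_idx (p ord_max) q in c_next *.
clearbody c; congr X; first by rewrite ffunE inordK // ltnn c_next.
apply/ffunP => r; rewrite set_idxE !ffunE ltnS [(r <= n)%N]leq_eqVlt.
case: (r =P inord n) => [-> | ne_rn]; first by rewrite inordK // eqxx widen_n.
rewrite (_ : val r == n = false) //.
by apply: contra_notF ne_rn => /eqP <-; rewrite inord_val.
Qed.

Lemma ptr1_cyc_ampl (A : 'M[C]_d) n (i j : idx d n.+2) :
  ptr1 (opmul (ptrans ord_max (perm_op C (cyc n.+3))) (ampl (n := n.+2) A)) i j =
  A (i ord0) (i ord_max) * (shift_match i j)%:R.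
Proof.
have factor a b :
    [&& a == i ord_max, b == i ord0 & shift_match i j]%:R * A b a =
    (shift_match i j)%:R * A b a * (b == i ord0)%:R * (a == i ord_max)%:R.
  by case: (a == _); case: (b == _); rewrite /= ?(mulr1, mulr0, mul0r).
rewrite ptr1_mul_ampl.
under eq_bigr => a _ do under eq_bigr => b _ do rewrite ptrans_cyc_cons factor.
under eq_bigr => a _ do rewrite -mulr_suml sum_mul_natr_eq.
by rewrite sum_mul_natr_eq mulrC.
Qed.

Lemma reshuffles_ampl (A : 'M[C]_d) n (i j : idx d n.+2) :
  foldr (fun b Y => reshuffle ord_max (inord b) Y) (ampl (n := n.+1) A)
        (iota 0 n.+1) i j =
  A (i ord0) (i ord_max) * (shift_match i j)%:R.
Proof.
have ket : cons_idx (i ord_max) j (inord n.+1) = j (widen_ord (leqnSn n.+1) ord_max).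
  rewrite (_ : inord n.+1 = lift ord0 (widen_ord (leqnSn n.+1) ord_max)).
    exact: cons_idx_lift0.
  by apply: val_inj; rewrite /= inordK.
rewrite foldr_reshuffle // ket /ampl /shift_match set_idxE /=.
set bra := [ffun r : 'I_n.+2 => _].
have bra0 : bra ord0 = i ord_max by rewrite ffunE /= widen_ord0 cons_idx0.
have bra_lift (l : 'I_n.+1) : bra (lift ord0 l) =
    if l == ord_max then j ord_max else j (widen_ord (leqnSn n.+1) l).
  rewrite ffunE /= ltnS; case: (l =P ord_max) => [-> | /eqP ne_l_max].
    by rewrite ltnn (_ : lift ord0 ord_max = ord_max) //; apply: val_inj.
  move: ne_l_max; rewrite ltn_neqAle -ltnS ltn_ord andbT -val_eqE /= => ->.
  by rewrite widen_lift0 cons_idx_lift0.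
rewrite bra0; congr (_ * (nat_of_bool _)%:R); apply: eq_forallb => l.
rewrite bra_lift !set_idxE lift0_eq_max.
by case: (l =P ord_max) => [-> | _]; first exact: eq_sym.
Qed.

End Operators.

Theorem proposition5 (C : numClosedFieldType) (d m : nat) (hm : (1 <= m)%N)
    (A : 'M[C]_d) :
  ptr1 (opmul (ptrans ord_max (@perm_op C d m.+2 (cyc m.+2))) (@ampl C d A m.+1))
  = foldl (fun (X : op C d m.+1) (b : nat) => reshuffle ord_max (inord b) X)
          (@ampl C d A m) (rev (iota 0 m)).
Proof.
case: m hm => // n _.
apply: functional_extensionality => i; apply: functional_extensionality => j.
by rewrite foldl_rev ptr1_cyc_ampl reshuffles_ampl.
Qed.
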